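(* Let $G=(V,E)$ be a finite simple graph and let $F$ be any finite field. Let $L$ be its connection matrix and $|H|$ its sign-less Hodge Laplacian, both regarded as matrices over $F$ via the canonical ring homomorphism $\mathbb{Z}\to F$. Then $L$ is invertible over $F$ and $|H|=L-L^{-1}$ holds over $F$. In particular, the map $\psi\mapsto L\psi$ is a bijection of the finite set $F^X$ of $F$-valued functions on the simplices, and the two-sided orbit $n\mapsto L^n\psi$, $n\in\mathbb{Z}$, is well defined.
   Context: Let $G=(V,E)$ be a finite simple graph. Its associated $1$-dimensional simplicial complex is the set of simplices $X=\{\{v\}: v\in V\}\cup E$, where each edge is regarded as a $2$-element subset of $V$; matrices are indexed by $X$. The connection matrix $L$ has $L(x,y)=1$ if $x\cap y\neq\emptyset$ and $L(x,y)=0$ otherwise. The sign-less exterior derivative $|d|$ has $|d|(x,y)=1$ if $y\subset x$ and $|x|=|y|+1$, and $0$ otherwise; the sign-less Hodge Laplacian is $|H|=(|d|+|d|^T)^2$. *)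

From HB Require Import structures.
From mathcomp Require Import all_boot all_order all_algebra.
Set Implicit Arguments. Unset Strict Implicit. Unset Printing Implicit Defensive.
Import GRing.Theory.
Local Open Scope ring_scope.

(* A finite simple graph: vertex type V : finType, adjacency e : rel V,
   assumed symmetric and irreflexive in the theorem. *)

(* Simplices of the 1-dimensional complex: singletons {v} and edges {u,v}. *)
Definition is_simplex (V : finType) (e : rel V) (x : {set V}) : bool :=
  (#|x| == 1)%N || [exists u : V, exists v : V, e u v && (x == [set u; v])].

Definition simplex (V : finType) (e : rel V) := {x : {set V} | is_simplex e x}.

(* number of simplices; matrices are indexed by 'I_(nsimp e) via enum_val *)
Definition nsimp (V : finType) (e : rel V) : nat := #|{: simplex e}|.

Definition sx (V : finType) (e : rel V) (i : 'I_(nsimp e)) : {set V} :=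
  val (@enum_val (simplex e) predT i).

Definition conn_mx (F : nzRingType) (V : finType) (e : rel V) : 'M[F]_(nsimp e) :=
  \matrix_(i, j) ((sx i :&: sx j) != set0)%:R.

Definition absd_mx (F : nzRingType) (V : finType) (e : rel V) : 'M[F]_(nsimp e) :=
  \matrix_(i, j) ((sx j \subset sx i) && (#|sx i| == #|sx j| + 1)%N)%:R.

Definition abshodge_mx (F : nzRingType) (V : finType) (e : rel V) : 'M[F]_(nsimp e) :=
  let D := absd_mx F e + (absd_mx F e)^T in D *m D.

(** Split the simplices into vertices and edges and let [S] be the diagonal
    sign matrix (+1 on vertices, -1 on edges).  Since [|d|] maps vertices to
    edges, [|d| S = |d|], [S |d| = -|d|] and [|d|^2 = 0].  Entrywise,
    [L = S + |d| + |d|^T + |d| |d|^T]: the last term counts common vertices of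
    two edges, which is [2] on the diagonal (compensating the [-1] of [S]) and
    at most [1] off it.  Hence [L = (1 + |d|)(S + |d|^T)] is a product of a
    unipotent matrix and an involution, with inverse
    [(S + |d|^T)(1 - |d|) = S + |d| + |d|^T - |d|^T |d|], and
    [L - L^-1 = |d| |d|^T + |d|^T |d| = |H|], over any ring. *)
From HB Require Import structures.
From mathcomp Require Import all_boot all_order all_algebra.
Set Implicit Arguments. Unset Strict Implicit. Unset Printing Implicit Defensive.
Import GRing.Theory.
Local Open Scope ring_scope.

Section UnipotentTimesInvolution.
Variables (R : pzRingType) (S d T : R).
Hypotheses (SS : S * S = 1) (dd : d * d = 0) (TT : T * T = 0).
Hypotheses (Sd : S * d = - d) (dS : d * S = d) (ST : S * T = T) (TS : T * S = - T).

Lemma sqr_add_invol_nilp : (S + T) * (S + T) = 1.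
Proof. by rewrite mulrDl !mulrDr SS ST TS TT addr0 addrK. Qed.

Lemma unipotent_mulVr : (1 + d) * (1 - d) = 1.
Proof. by rewrite mulrBr mulr1 mulrDl mul1r dd addr0 addrK. Qed.

Lemma mulr_unipotent_invol : (1 + d) * (S + T) = S + d + T + d * T.
Proof. by rewrite mulrDl mul1r mulrDr dS addrA (addrAC S). Qed.

Lemma mulr_invol_unipotent : (S + T) * (1 - d) = S + d + T - T * d.
Proof.
by rewrite mulrBr mulr1 mulrDl Sd opprD opprK addrA (addrAC S).
Qed.

Lemma unipotent_invol_inverse :
  (S + d + T + d * T) * (S + d + T - T * d) = 1.
Proof.
rewrite -mulr_unipotent_invol -mulr_invol_unipotent -mulrA.
by rewrite (mulrA (S + T)) sqr_add_invol_nilp mul1r unipotent_mulVr.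
Qed.

End UnipotentTimesInvolution.

Lemma card_setI_distinct_pairs (T : finType) (A B : {set T}) :
  #|A| = 2 -> #|B| = 2 -> A != B -> (#|A :&: B| <= 1)%N.
Proof.
move=> A2 B2 /eqP neqAB; rewrite leqNgt; apply/negP => AB2.
have eqA : A :&: B = A by apply/eqP; rewrite eqEcard subsetIl A2.
have eqB : A :&: B = B by apply/eqP; rewrite eqEcard subsetIr B2.
by apply: neqAB; rewrite -eqA -[RHS]eqB.
Qed.

Section Simplices.
Variables (V : finType) (e : rel V).
Hypothesis e_irr : irreflexive e.

Definition is_vertex (i : 'I_(nsimp e)) : bool := #|sx i| == 1%N.

Lemma card_sx (i : 'I_(nsimp e)) : #|sx i| = (~~ is_vertex i).+1.
Proof.
rewrite /is_vertex /sx; case: (enum_val i) => x /=.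
case/orP=> [/eqP -> // | /existsP [u /existsP [v /andP [euv /eqP ->]]]].
have uv : u != v by apply: contraTneq euv => ->; rewrite e_irr.
by rewrite cards2 uv.
Qed.

Lemma sx_inj : injective (@sx V e).
Proof. by move=> i j /val_inj /enum_val_inj. Qed.

Lemma card_vertices_sub (A : {set V}) :
  #|[pred k : 'I_(nsimp e) | is_vertex k && (sx k \subset A)]| = #|A|.
Proof.
have set1_simplex (v : V) : is_simplex e [set v] by rewrite /is_simplex cards1.
have sx_rank (s : simplex e) : sx (enum_rank s) = val s by rewrite /sx enum_rankK.
rewrite -(card_imset _ sx_inj) -[RHS](card_imset _ set1_inj).
apply: eq_card => x; apply/imsetP/imsetP => [[k /andP [/cards1P [v xv] kA] ->]|].
  by exists v; rewrite // -sub1set -xv.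
move=> [v vA ->]; exists (enum_rank (Sub [set v] (set1_simplex v) : simplex e)).
  by rewrite inE sx_rank /is_vertex sx_rank /= sub1set vA cards1.
by rewrite sx_rank.
Qed.

End Simplices.

Section ConnectionMatrix.
Variables (F : nzRingType) (V : finType) (e : rel V).
Hypothesis e_irr : irreflexive e.
Local Notation n := (nsimp e).
Local Notation d := (absd_mx F e).

Definition sign_mx : 'M[F]_n := diag_mx (\row_i (if is_vertex i then 1 else -1)).

Lemma absd_mx_vertexE :
  d = \matrix_(i, j) ((sx j \subset sx i) && ~~ is_vertex i && is_vertex j)%:R.
Proof.
apply/matrixP => i j; rewrite !mxE !card_sx //.
by case: is_vertex; case: is_vertex; rewrite /= ?andbF ?andbT.
Qed.

Lemma mul_sign_sign : sign_mx *m sign_mx = 1%:M.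
Proof.
apply/matrixP => i j; rewrite mul_diag_mx !mxE.
by case: is_vertex; rewrite ?mul1r ?mulN1r ?mulNrn ?opprK.
Qed.

Lemma mul_sign_absd : sign_mx *m d = - d.
Proof.
rewrite absd_mx_vertexE; apply/matrixP => i j; rewrite mul_diag_mx !mxE.
by case: is_vertex; rewrite ?andbF /= ?mul1r ?oppr0 ?mulN1r.
Qed.

Lemma mul_absd_sign : d *m sign_mx = d.
Proof.
rewrite absd_mx_vertexE; apply/matrixP => i j; rewrite mul_mx_diag !mxE.
by case: (is_vertex j); rewrite ?andbF /= ?mulr1 ?mul0r.
Qed.

Lemma absd_mx_sqr : d *m d = 0.
Proof.
rewrite absd_mx_vertexE; apply/matrixP => i j; rewrite !mxE; apply: big1 => k _.
by rewrite !mxE; case: (is_vertex k); rewrite ?andbF /= ?mulr0 ?mul0r.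
Qed.

Lemma mul_sign_tr_absd : sign_mx *m d^T = d^T.
Proof.
rewrite absd_mx_vertexE; apply/matrixP => i j; rewrite mul_diag_mx !mxE.
by case: (is_vertex i); rewrite ?andbF /= ?mul1r ?mulr0.
Qed.

Lemma mul_tr_absd_sign : d^T *m sign_mx = - d^T.
Proof.
rewrite absd_mx_vertexE; apply/matrixP => i j; rewrite mul_mx_diag !mxE.
by case: (is_vertex j); rewrite ?andbF /= ?mulr1 ?oppr0 ?mulrN1.
Qed.

Lemma tr_absd_mx_sqr : d^T *m d^T = 0.
Proof.
rewrite absd_mx_vertexE; apply/matrixP => i j; rewrite !mxE; apply: big1 => k _.
by rewrite !mxE; case: (is_vertex k); rewrite ?andbF /= ?mulr0 ?mul0r.
Qed.

Lemma mul_absd_tr_card : d *m d^T =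
  \matrix_(i, j) (if ~~ is_vertex i && ~~ is_vertex j then #|sx i :&: sx j|%:R else 0).
Proof.
rewrite absd_mx_vertexE; apply/matrixP => i j; rewrite !mxE.
case: (boolP (is_vertex i)) => vi /=.
  by apply: big1 => k _; rewrite !mxE vi andbF mul0r.
case: (boolP (is_vertex j)) => vj /=.
  by apply: big1 => k _; rewrite !mxE vj andbF mulr0.
rewrite -(card_vertices_sub e (sx i :&: sx j)) -sum1_card natr_sum [RHS]big_mkcond.
apply: eq_bigr => k _; rewrite !mxE inE subsetI -natrM mulnb vi vj /=.
by case: is_vertex; case: (_ \subset _); case: (_ \subset _).
Qed.

Lemma conn_mx_decomp : conn_mx F e = sign_mx + d + d^T + d *m d^T.
Proof.
rewrite mul_absd_tr_card absd_mx_vertexE; apply/matrixP => i j; rewrite !mxE.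
case: (boolP (is_vertex i)) => vi; case: (boolP (is_vertex j)) => vj /=;
  rewrite ?andbF ?andbT /= ?addr0 ?add0r.
- have /cards1P [u su] := vi; have /cards1P [v sv] := vj.
  rewrite -(inj_eq (sx_inj (e:=e))) su sv (inj_eq set1_inj).
  by rewrite setI_eq0 disjoints1 negbK in_set1.
- have /negPf -> : i != j by apply: contraNneq _ vj => <-.
  have /cards1P [u ->] := vi.
  by rewrite mulr0n add0r setI_eq0 disjoints1 negbK sub1set.
- have /negPf -> : i != j by apply: contraNneq _ vi => ->.
  have /cards1P [v ->] := vj.
  by rewrite mulr0n add0r setIC setI_eq0 disjoints1 negbK sub1set.
- have [<- | neq_ij] := eqVneq i j.
    by rewrite setIid -cards_eq0 card_sx // vi /= mulr1n mulr2n addKr.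
  have : (#|sx i :&: sx j| <= 1)%N.
    by apply: card_setI_distinct_pairs; rewrite ?card_sx ?vi ?vj ?(inj_eq (sx_inj (e:=e))).
  by rewrite mulr0n add0r -cards_eq0; case: #|_| => [|[|]].
Qed.

Lemma abshodge_mx_sum : abshodge_mx F e = d *m d^T + d^T *m d.
Proof. by rewrite /abshodge_mx mulmxDl !mulmxDr absd_mx_sqr tr_absd_mx_sqr add0r addr0. Qed.

End ConnectionMatrix.

Theorem mainTheorem7 (F : finFieldType) (V : finType) (e : rel V)
    (e_sym : symmetric e) (e_irr : irreflexive e) :
  conn_mx F e \in unitmx /\
  abshodge_mx F e = conn_mx F e - invmx (conn_mx F e) /\
  bijective (fun psi : 'cV[F]_(nsimp e) => conn_mx F e *m psi).
Proof.
set L := conn_mx F e; set d := absd_mx F e; set S := sign_mx F e.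
have L_decomp : L = S + d + d^T + d *m d^T by exact: conn_mx_decomp.
have L_rinv : L *m (S + d + d^T - d^T *m d) = 1%:M.
  rewrite L_decomp mulmxE; apply: unipotent_invol_inverse; rewrite -mulmxE.
  - exact: mul_sign_sign.
  - exact: absd_mx_sqr.
  - exact: tr_absd_mx_sqr.
  - exact: mul_sign_absd.
  - exact: mul_absd_sign.
  - exact: mul_sign_tr_absd.
  - exact: mul_tr_absd_sign.
have [L_unit _] := mulmx1_unit L_rinv.
have L_inv : invmx L = S + d + d^T - d^T *m d.
  by rewrite -[invmx L]mulmx1 -L_rinv mulmxA mulVmx // mul1mx.
split=> //; split.
  by rewrite L_inv abshodge_mx_sum // L_decomp [_ + d *m _]addrC addrKA opprK.
by exists (mulmx (invmx L)) => psi; [exact: mulKmx | exact: mulKVmx].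
Qed.
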